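(* Let $n\geq 2$. For every integer $k$ with $0\leq k\leq (n-2)!$ there exists a u-word for $n$-permutations with incomparable elements at distance $n-1$ (in the sense defined in the context) of length $n!+(1-k)(n-1)$. In other words, such u-words exist of each of the lengths $n!+n-1,\ n!,\ n!-(n-1),\ \ldots,\ n!-(n-1)!+n-1$.
   Context: An $n$-permutation is a permutation $\pi=\pi_1\cdots\pi_n$ of $\{1,\ldots,n\}$. Let $w=w_1\cdots w_n$ be a word of length $n$ over the positive integers, where letters may repeat; equal letters are treated as incomparable. The word $w$ covers the $n$-permutation $\pi$ if for all $i,j\in\{1,\ldots,n\}$, $w_i<w_j$ implies $\pi_i<\pi_j$ (that is, $\pi$ is a linear extension of the partial order on positions induced by $w$, in which positions holding equal letters are incomparable). For example, $112$ covers $123$ and $213$. A u-word (universal word) for $n$-permutations is a finite word $u=u_1\cdots u_N$ over the positive integers with $N\geq n$ such that every $n$-permutation is covered by exactly one of the $N-n+1$ factors $u_iu_{i+1}\cdots u_{i+n-1}$, $1\leq i\leq N-n+1$. The u-word uses incomparable elements at distance $n-1$ if whenever $u_i=u_j$ with $i<j$, we have $j-i\geq n-1$ (so inside any factor of length $n$ only the first and last letters can be equal). *)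

From mathcomp Require Import all_boot all_order all_algebra.
Set Implicit Arguments.
Unset Strict Implicit.
Unset Printing Implicit Defensive.

(* Words are finite sequences of naturals; positions are 0-indexed. *)

Definition is_nperm (n : nat) (p : seq nat) : bool := perm_eq p (iota 1 n).

Definition pos_word (u : seq nat) : bool := all (fun x => 0 < x) u.

Definition covers (w p : seq nat) : bool :=
  (size w == size p) &&
  [forall i : 'I_(size w), forall j : 'I_(size w),
     (nth 0 w i < nth 0 w j) ==> (nth 0 p i < nth 0 p j)].

Definition factor (u : seq nat) (i n : nat) : seq nat := take n (drop i u).

Definition uword (n : nat) (u : seq nat) : Prop :=
  pos_word u /\ n <= size u /\
  forall p : seq nat, is_nperm n p ->
    count (fun i => covers (factor u i n) p) (iota 0 (size u - n).+1) = 1.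

(* Incomparable elements at distance n-1: equal letters at positions i < j
   satisfy j - i >= n - 1. *)
Definition dist_incomp (n : nat) (u : seq nat) : Prop :=
  forall i j : nat, i < j < size u -> nth 0 u i = nth 0 u j -> n - 1 <= j - i.

(* View an n-permutation p as an edge of the overlap graph on (n-1)-permutations,
   from the pattern of its first n-1 letters to the pattern of its last n-1 letters.
   This graph is balanced and strongly connected, so it has an Eulerian trail, and a
   trail is written out as a word letter by letter: doubling all letters written so
   far leaves room for a fresh odd letter of any prescribed rank, so that the new
   window has exactly the pattern of the next edge.
   For an (n-1)-permutation a, the two edges from a to rot 1 a whose last letter is
   just below, resp. just above, the first one are both covered by a single window
   whose last letter repeats its first one.  Fix a rotation-closed set S of k(n-1)
   vertices (the rotations of k permutations ending with n-1) and drop one of these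
   two edges at every a in S: the graph stays balanced and connected, and its
   Eulerian trail has n! - k(n-1) edges, giving a u-word of length
   n! - k(n-1) + (n-1) whose repeated letters are exactly n-1 apart. *)

From mathcomp Require Import all_boot all_order all_algebra zify.
Set Implicit Arguments.
Unset Strict Implicit.
Unset Printing Implicit Defensive.

(** * Eulerian trails *)

Section EulerianTrail.

Variables (T V : eqType) (src dst : T -> V).

Fixpoint walk (v : V) (c : seq T) (w : V) : bool :=
  if c is e :: c' then (src e == v) && walk (dst e) c' w else v == w.

Definition linked (e f : T) := dst e == src f.

Definition reaches (s : seq T) (v : V) := has (fun e => dst e == v) s.

Lemma walk_rcons v c f : walk v c (src f) -> walk v (rcons c f) (dst f).
Proof.
elim: c v => [|e c IH] v /=; first by move=> /eqP->; rewrite !eqxx.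
by case/andP=> -> /IH.
Qed.

Lemma walk_exit s c v w : reaches s v -> walk v c w -> ~~ all (mem s) c ->
  exists2 g, g \in c & (g \notin s) && reaches s (src g).
Proof.
elim: c v => [|e c IH] v //= Rv /andP[/eqP se Wc].
case: (boolP (e \in s)) => /= es Hc.
  have [|g gc gP] := IH (dst e) _ Wc Hc; first by apply/hasP; exists e.
  by exists g => //; rewrite inE gc orbT.
by exists e; rewrite ?inE ?eqxx // es se.
Qed.

Lemma path_linked_count v e p : path linked e p ->
  count (fun x => src x == v) (e :: p) + (dst (last e p) == v) =
  count (fun x => dst x == v) (e :: p) + (src e == v).
Proof.
elim: p e => [|f p IH] e /=; first by rewrite !addn0 addnC.
by case/andP=> /eqP Ref /IH; rewrite /= Ref; lia.
Qed.

Lemma walk_map (f : T -> T) v c w :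
  {in c, forall e, src (f e) = src e /\ dst (f e) = dst e} ->
  walk v (map f c) w = walk v c w.
Proof.
elim: c v => //= e c IH v fc; have [-> ->] := fc e (mem_head e c).
by rewrite IH // => x xc; apply: fc; rewrite inE xc orbT.
Qed.

Variable es : seq T.
Hypothesis es_uniq : uniq es.
Hypothesis balanced :
  forall v, count (fun e => src e == v) es = count (fun e => dst e == v) es.
Hypothesis connected : forall e f, e \in es -> f \in es ->
  exists2 c, all (mem es) c & walk (dst e) c (src f).

Definition trail (s : seq T) :=
  [&& s != [::], uniq s, all (mem es) s & sorted linked s].

Lemma trail_grow_open e p : trail (e :: p) -> dst (last e p) != src e ->
  exists2 s, trail s & size s = (size p).+2.
Proof.
case/and4P=> _ Up Ap Sp open; set v := dst (last e p).
(* The trail enters its endpoint v once more than it leaves it, so by balance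
   some unused edge leaves v. *)
have := path_linked_count v Sp; rewrite eqxx eq_sym (negbTE open) addn0 addn1.
have used_in : count (fun x => dst x == v) (e :: p) <= count (fun x => dst x == v) es.
  rewrite -!size_filter uniq_leq_size ?filter_uniq // => x.
  by rewrite !mem_filter => /andP[-> /(allP Ap)].
move=> used_out.
have : has (fun f => (src f == v) && (f \notin e :: p)) es.
  apply: contraT => /hasPn unused.
  suff : count (fun x => src x == v) es <= count (fun x => src x == v) (e :: p).
    by rewrite balanced; lia.
  rewrite -!size_filter uniq_leq_size ?filter_uniq // => x.
  rewrite !mem_filter => /andP[xv xs]; rewrite xv /=.
  by apply: contraT => xn; have := unused x xs; rewrite xv xn.
case/hasP=> f fs /andP[fv fp]; exists (rcons (e :: p) f); last by rewrite size_rcons.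
apply/and4P; split; rewrite ?rcons_uniq ?fp ?all_rcons ?Ap ?andbT //.
by rewrite /= rcons_path /linked eq_sym fv andbT.
Qed.

Lemma trail_grow_closed e p f : trail (e :: p) -> dst (last e p) == src e ->
  f \in es -> f \notin e :: p -> exists2 s, trail s & size s = (size p).+2.
Proof.
move=> /and4P[_ Us As Ss] closed fes fs.
have les : last e p \in es by apply: (allP As); rewrite mem_last.
have [c Ac Wc] := connected les fes.
have reach : reaches (e :: p) (dst (last e p)).
  by apply/hasP; exists (last e p); rewrite ?mem_last.
have fresh : ~~ all (mem (e :: p)) (rcons c f).
  by apply/allPn; exists f; rewrite ?mem_rcons ?mem_head.
have [g gc /andP[gs /hasP[e1 e1s /eqP e1g]]] := walk_exit reach (walk_rcons Wc) fresh.
have ges : g \in es by move: gc; rewrite mem_rcons inE => /predU1P[->|/(allP Ac)].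
(* A closed trail may be rotated to end with e1, after which g can be appended. *)
have [j s' rot_e1] := rot_to e1s.
have Cs : cycle linked (rot 1 (rot j (e :: p))).
  by rewrite !rot_cycle /= rcons_path /linked closed andbT.
have Ms : rot 1 (rot j (e :: p)) =i e :: p by move=> x; rewrite !mem_rot.
have Us' : uniq (rot 1 (rot j (e :: p))) by rewrite !rot_uniq.
have Ss' : size (rot 1 (rot j (e :: p))) = (size p).+1 by rewrite !size_rot.
rewrite rot_e1 rot1_cons in Cs Ms Us' Ss'.
case Er: (rcons s' e1) Cs Ms Us' Ss' => [|h t]; first by case: (s') Er.
move=> Cht Mht Uht Sht.
have lt : last h t = e1 by rewrite -[last h t]/(last e1 (h :: t)) -Er last_rcons.
exists (rcons (h :: t) g); last by rewrite size_rcons Sht.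
apply/and4P; split => //.
- by rewrite rcons_uniq Mht gs.
- by rewrite all_rcons; apply/andP; split => //; apply/allP => x; rewrite Mht; exact: (allP As).
- by move: Cht; rewrite /= !rcons_path lt /linked e1g eqxx andbT => /andP[].
Qed.

Lemma trail_grow s : trail s ->
  perm_eq s es \/ exists2 s', trail s' & size s' = (size s).+1.
Proof.
case: s => [|e p] Ts; first by move: Ts; rewrite /trail.
have [closed|open] := boolP (dst (last e p) == src e); last first.
  by right; exact: trail_grow_open Ts open.
have [covered|/allPn[f fes fn]] := boolP (all (mem (e :: p)) es).
  left; case/and4P: Ts => _ Us As _; apply: uniq_perm => // x.
  by apply/idP/idP => [/(allP As)|/(allP covered)].
by right; exact: trail_grow_closed Ts closed fes fn.
Qed.

Theorem eulerian_trail : exists2 s, perm_eq s es & sorted linked s.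
Proof.
case Hes: es => [|e0 es']; first by exists [::].
have e0es : e0 \in es by rewrite Hes mem_head.
rewrite -Hes.
suff grow b s : size es - size s <= b -> trail s -> exists2 s, perm_eq s es & sorted linked s.
  apply: (grow (size es) [:: e0]); first by rewrite leq_subr.
  by rewrite /trail /= e0es.
elim: b s => [|b IH] s Hb Ts; have [Ps|[s' Ts' Hs']] := trail_grow Ts.
- by exists s => //; case/and4P: Ts.
- have : size s' <= size es.
    by case/and4P: Ts' => _ U A _; apply: uniq_leq_size => // x /(allP A).
  by lia.
- by exists s => //; case/and4P: Ts.
- by apply: (IH s') => //; lia.
Qed.

End EulerianTrail.

(** * Standardization *)

Lemma size_nperm m a : is_nperm m a -> size a = m.
Proof. by move/perm_size; rewrite size_iota. Qed.

Lemma nperm_uniq m a : is_nperm m a -> uniq a.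
Proof. by move/perm_uniq->; exact: iota_uniq. Qed.

Lemma mem_nperm m a x : is_nperm m a -> (x \in a) = (0 < x <= m).
Proof. by move/perm_mem->; rewrite mem_iota; lia. Qed.

Lemma count_rcons (T : Type) (a : pred T) s x : count a (rcons s x) = count a s + a x.
Proof. by rewrite -cats1 count_cat /= addn0. Qed.

Lemma count_nth_iota (T : Type) (x0 : T) (a : pred T) s :
  count a s = count (fun k => a (nth x0 s k)) (iota 0 (size s)).
Proof. by rewrite -[s in LHS](mkseq_nth x0) count_map. Qed.

Definition rank (s : seq nat) (x : nat) := count (fun y => y <= x) s.

Definition std (s : seq nat) := map (rank s) s.

(* For a an m-permutation and 0 < j <= m+1, the (m+1)-permutation with prefix
   pattern a and last letter j. *)
Definition extend (a : seq nat) (j : nat) := rcons [seq y + (j <= y) | y <- a] j.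

Definition dbl (s : seq nat) := map (muln 2) s.

Lemma dbl_uniq s : uniq (dbl s) = uniq s.
Proof. by apply: map_inj_uniq => x y /=; lia. Qed.

Lemma size_std s : size (std s) = size s.
Proof. exact: size_map. Qed.

Lemma count_dbl_lt_odd s y : count (fun z => z < (2 * y).+1) (dbl s) = rank s y.
Proof. by rewrite count_map; apply: eq_count => z /=; lia. Qed.

Lemma count_dbl_lt_pred s y : 0 < y ->
  count (fun z => z < (2 * y).-1) (dbl s) = count (fun z => z < y) s.
Proof. by move=> y_gt0; rewrite count_map; apply: eq_count => z /=; lia. Qed.

Lemma rank_iota m x : x <= m -> rank (iota 1 m) x = x.
Proof.
move=> le_xm; rewrite /rank -(subnKC le_xm) iotaD count_cat.
have -> : count (fun y => y <= x) (iota 1 x) = x.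
  rewrite (@eq_in_count _ _ predT) ?count_predT ?size_iota // => y.
  by rewrite mem_iota /=; lia.
rewrite (@eq_in_count _ _ pred0) ?count_pred0 ?addn0 // => y.
by rewrite mem_iota /=; lia.
Qed.

Lemma rank_nperm m a x : is_nperm m a -> x <= m -> rank a x = x.
Proof. by move=> Pa; rewrite /rank (permP Pa); exact: rank_iota. Qed.

Lemma std_nperm m a : is_nperm m a -> std a = a.
Proof.
move=> Pa; rewrite /std -[RHS]map_id; apply/eq_in_map => x xa.
by apply: (rank_nperm Pa); move: xa; rewrite (mem_nperm x Pa) => /andP[].
Qed.

Lemma std_mono s f : {in s &, {homo f : x y / x < y}} -> std (map f s) = std s.
Proof.
move=> /leq_mono_in mono_f; rewrite /std -map_comp; apply/eq_in_map => x xs /=.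
by rewrite /rank count_map; apply: eq_in_count => y ys /=; rewrite mono_f.
Qed.

Lemma std_dbl s : std (dbl s) = std s.
Proof. by apply: std_mono => x y _ _ /=; lia. Qed.

Lemma rank_lt s x y : y \in s -> x < y -> rank s x < rank s y.
Proof.
move=> ys lt_xy.
have -> : rank s y = rank s x + count (fun z => x < z <= y) s.
  by rewrite /rank; elim: s {ys} => //= z s ->; lia.
by rewrite -[X in X < _]addn0 ltn_add2l -has_count; apply/hasP; exists y; rewrite ?lt_xy ?leqnn.
Qed.

Lemma rank_mem s x : uniq s -> x \in s -> rank s x = (count (fun y => y < x) s).+1.
Proof.
move=> Us xs; rewrite -add1n; have <- : count_mem x s = 1 by rewrite count_uniq_mem ?xs.
by rewrite /rank; elim: s {Us xs} => //= y s ->; lia.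
Qed.

Lemma rank_inj s : {in s &, injective (rank s)}.
Proof.
move=> x y xs ys E; case: (ltngtP x y) => // [lt_xy|lt_yx].
- by have := rank_lt ys lt_xy; rewrite E ltnn.
- by have := rank_lt xs lt_yx; rewrite E ltnn.
Qed.

Lemma nperm_std s : uniq s -> is_nperm (size s) (std s).
Proof.
move=> Us; have Ustd : uniq (std s) by rewrite map_inj_in_uniq //; exact: rank_inj.
have sub : {subset std s <= iota 1 (size s)}.
  move=> _ /mapP[x xs ->]; rewrite mem_iota add1n ltnS count_size andbT.
  by rewrite -has_count; apply/hasP; exists x.
apply: uniq_perm; rewrite ?iota_uniq //.
by have [|] := uniq_min_size Ustd sub; rewrite ?size_map ?size_iota.
Qed.

Lemma rank_surj s k : uniq s -> all (fun x => 0 < x) s -> k <= size s ->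
  exists y, rank s y = k.
Proof.
move=> Us pos_s; case: k => [_|k lt_ks].
  exists 0; apply/eqP; rewrite eqn0Ngt -has_count; apply/hasPn => y ys /=.
  by rewrite -ltnNge; exact: (allP pos_s).
have : k.+1 \in std s by rewrite (mem_nperm _ (nperm_std Us)) lt_ks.
by case/mapP=> y _ ->; exists y.
Qed.

Lemma std_rcons s x : x \notin s ->
  std (rcons s x) = extend (std s) (count (fun y => y < x) s).+1.
Proof.
move=> xs.
have rank_x : rank s x = count (fun y => y < x) s.
  apply: eq_in_count => y ys /=; rewrite leq_eqVlt.
  by have /negbTE-> : y != x by apply: contraNneq xs => <-.
rewrite /std /extend map_rcons {2}/rank count_rcons leqnn -/(rank s x) rank_x addn1.
congr rcons.
rewrite -map_comp; apply/eq_in_map => z zs /=.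
rewrite /rank count_rcons -/(rank s z) -rank_x; congr addn.
have zx : z != x by apply: contraNneq xs => <-.
case: (ltngtP x z) => [lt_xz|lt_zx|eq_xz]; last by rewrite eq_xz eqxx in zx.
- by rewrite rank_lt.
- rewrite ltnNge (_ : rank s z <= rank s x) //.
  by apply: sub_count => y /=; lia.
Qed.

Lemma std_rev s : std (rev s) = rev (std s).
Proof. by rewrite /std map_rev; congr rev; apply/eq_map => x; rewrite /rank count_rev. Qed.

Lemma std_rot k s : std (rot k s) = rot k (std s).
Proof.
have /permP rot_count : perm_eq (rot k s) s by rewrite perm_rot.
by rewrite /std map_rot; congr rot; apply/eq_map => x; rewrite /rank rot_count.
Qed.

Lemma std_map_rank s t : {subset t <= s} -> std (map (rank s) t) = std t.
Proof. by move=> sub_ts; apply: std_mono => x y xt yt; apply: rank_lt; apply: sub_ts. Qed.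

Definition perms m := permutations (iota 1 m).

Lemma mem_perms m p : (p \in perms m) = is_nperm m p.
Proof. exact: mem_permutations. Qed.

Lemma perms_uniq m : uniq (perms m).
Proof. exact: permutations_uniq. Qed.

Lemma size_perms m : size (perms m) = m`!.
Proof. by rewrite size_permutations ?iota_uniq // size_iota. Qed.

(** * The overlap graph *)

Section OverlapGraph.

Variable m : nat.

Definition src (p : seq nat) := std (take m p).
Definition dst (p : seq nat) := std (behead p).

Lemma extend_std a j : is_nperm m a -> 0 < j <= m.+1 ->
  extend a j = std (rcons (dbl a) (2 * j).-1).
Proof.
move=> Pa Hj; have fresh : (2 * j).-1 \notin dbl a by apply/mapP => -[y _]; lia.
rewrite std_rcons // std_dbl (std_nperm Pa) count_map.
rewrite (@eq_count _ _ (fun y => y <= j.-1)) => [|y /=]; last by lia.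
by rewrite -/(rank a j.-1) (rank_nperm Pa) ?prednK //; lia.
Qed.

Lemma nperm_extend a j : is_nperm m a -> 0 < j <= m.+1 -> is_nperm m.+1 (extend a j).
Proof.
move=> Pa Hj; rewrite (extend_std Pa Hj).
have fresh : (2 * j).-1 \notin dbl a by apply/mapP => -[y _]; lia.
have Ud : uniq (dbl a) by rewrite dbl_uniq (nperm_uniq Pa).
have := nperm_std (s := rcons (dbl a) (2 * j).-1).
by rewrite rcons_uniq fresh Ud size_rcons size_map (size_nperm Pa); apply.
Qed.

Lemma src_extend a j : is_nperm m a -> src (extend a j) = a.
Proof.
move=> Pa; rewrite /src /extend -cats1 take_size_cat ?size_map ?(size_nperm Pa) //.
by rewrite std_mono ?(std_nperm Pa) // => x y _ _ /=; lia.
Qed.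

Lemma extend_inj a : injective (extend a).
Proof. by move=> j1 j2 /(congr1 (last 0)); rewrite /extend !last_rcons. Qed.

Lemma nperm_extendE p : is_nperm m.+1 p ->
  p = extend (src p) (last 0 p) /\ 0 < last 0 p <= m.+1.
Proof.
case/lastP: p => [/size_nperm //|t j] Pp.
have /andP[jt _] : (j \notin t) && uniq t by rewrite -rcons_uniq (nperm_uniq Pp).
have St : size t = m by have := size_nperm Pp; rewrite size_rcons => -[].
have Hj : 0 < j <= m.+1 by rewrite -(mem_nperm j Pp) mem_rcons mem_head.
rewrite last_rcons; split => //.
rewrite /src -cats1 take_size_cat // cats1 -{1}(std_nperm Pp) std_rcons //; congr extend.
have /(rank_nperm Pp) : j.-1 <= m.+1 by lia.
rewrite /rank count_rcons.
rewrite (@eq_count _ _ (fun y => y < j)) => [|y /=]; last by lia.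
by rewrite (_ : (j <= j.-1) = false); lia.
Qed.

Lemma nperm_src p : is_nperm m.+1 p -> is_nperm m (src p).
Proof.
move=> Pp; have := nperm_std (take_uniq m (nperm_uniq Pp)).
by rewrite size_takel ?(size_nperm Pp).
Qed.

Lemma nperm_dst p : is_nperm m.+1 p -> is_nperm m (dst p).
Proof.
move=> Pp; have := nperm_std (s := behead p); rewrite size_behead (size_nperm Pp).
by apply; case: p Pp => //= x s /nperm_uniq /andP[].
Qed.

Lemma dst_rev p : size p = m.+1 -> dst p = rev (src (rev p)).
Proof. by move=> Sp; rewrite /src /dst take_rev Sp subSnn drop1 std_rev revK. Qed.

Lemma count_src v : count (fun p => src p == v) (perms m.+1) = is_nperm m v * m.+1.
Proof.
have [Pv|nPv] := boolP (is_nperm m v); last first.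
  apply/eqP; rewrite mul0n eqn0Ngt -has_count; apply/hasP => -[p].
  by rewrite mem_perms => /nperm_src Pp /eqP srcv; rewrite -srcv Pp in nPv.
rewrite mul1n -size_filter -[in RHS](size_iota 1 m.+1) -(size_map (extend v)).
apply/perm_size/uniq_perm; rewrite ?filter_uniq ?perms_uniq //.
  by rewrite map_inj_uniq ?iota_uniq //; exact: extend_inj.
move=> p; rewrite mem_filter mem_perms; apply/andP/mapP => [[/eqP srcv Pp]|[j]].
  have [Ep Hj] := nperm_extendE Pp.
  by exists (last 0 p); [rewrite mem_iota; lia | rewrite {1}Ep srcv].
rewrite mem_iota => Hj ->; rewrite src_extend // nperm_extend //; lia.
Qed.

Lemma count_dst v : count (fun p => dst p == v) (perms m.+1) = is_nperm m v * m.+1.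
Proof.
have rev_inj : injective (@rev nat) := inv_inj (@revK nat).
have rev_perms : perm_eq (map rev (perms m.+1)) (perms m.+1).
  apply: uniq_perm; rewrite ?map_inj_uniq ?perms_uniq // => p.
  by rewrite -{1}[p]revK (mem_map rev_inj) !mem_perms /is_nperm perm_rev.
rewrite (@eq_in_count _ _ (fun p => src (rev p) == rev v)) => [|p]; last first.
  rewrite mem_perms => /size_nperm Sp /=.
  by rewrite (dst_rev Sp) -[RHS](inj_eq rev_inj) revK.
by rewrite -(count_map rev (fun p => src p == rev v)) (permP rev_perms) count_src
           /is_nperm perm_rev.
Qed.

Lemma dst_extend_head a j : 0 < m -> is_nperm m a ->
  head 0 a <= j <= (head 0 a).+1 -> dst (extend a j) = rot 1 a.
Proof.
case: a => [|r b] m_gt0 Pa /= Hj; first by move: m_gt0; rewrite -(size_nperm Pa).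
have /andP[rb _] := nperm_uniq Pa.
have Prot : is_nperm m (rcons b r) by rewrite -rot1_cons /is_nperm perm_rot.
pose g y := if y == r then j else y + (r < y).
have Eb : behead (extend (r :: b) j) = map g (rcons b r).
  rewrite map_rcons /g eqxx; congr rcons; apply/eq_in_map => y yb.
  have yr : y != r by apply: contraNneq rb => <-.
  by rewrite (negbTE yr); lia.
rewrite /dst Eb std_mono ?(std_nperm Prot) ?rot1_cons // => y z _ _ lt_yz.
by rewrite /g; case: eqP; case: eqP; lia.
Qed.

Lemma src_std s : src (std s) = std (take m s).
Proof. by rewrite /src -[std s]/(map (rank s) s) -map_take std_map_rank // => x /mem_take. Qed.

Lemma dst_std s : dst (std s) = std (behead s).
Proof. by rewrite /dst -[std s]/(map (rank s) s) behead_map std_map_rank // => x /mem_behead. Qed.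

Definition windows (z : seq nat) :=
  [seq std (take m.+1 (drop i z)) | i <- iota 0 (size z - m)].

Lemma windows_cons a z : m < size (a :: z) ->
  windows (a :: z) = std (take m.+1 (a :: z)) :: windows z.
Proof.
move=> lt_mz; rewrite /windows /= subSn //= [iota 1 _](iotaDl 1 0) -map_comp.
by congr cons; apply: eq_map => i /=; rewrite add1n.
Qed.

Lemma walk_windows z : uniq z -> m <= size z ->
  walk src dst (std (take m z)) (windows z) (std (drop (size z - m) z)).
Proof.
elim: z => [|a z IH] Uz le_mz; first by rewrite /windows /= eqxx.
have [lt_mz|le_zm] := ltnP m (size (a :: z)); last first.
  rewrite /windows (_ : size (a :: z) - m = 0); last by lia.
  by rewrite drop0 take_oversize /=.
case/andP: Uz => _ Uz'.
rewrite windows_cons //; set e := take m.+1 (a :: z) => /=.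
rewrite src_std dst_std /e take_takel // eqxx /=.
by rewrite subSn //; apply: IH; rewrite //=; lia.
Qed.

Lemma nperm_windows z : uniq z -> all (is_nperm m.+1) (windows z).
Proof.
move=> Uz; apply/allP => p /mapP[i]; rewrite mem_iota => /andP[_ lt_i] ->.
have := nperm_std (take_uniq m.+1 (drop_uniq i Uz)).
by rewrite size_takel // size_drop; move: lt_i; rewrite add0n !ltn_subRL addnC.
Qed.

Lemma perms_connected x y : is_nperm m x -> is_nperm m y ->
  exists2 c, all (is_nperm m.+1) c & walk src dst x c y.
Proof.
move=> Px Py; set z := x ++ map (addn m) y.
have [Sx Sy] := (size_nperm Px, size_nperm Py).
have Uz : uniq z.
  rewrite cat_uniq (nperm_uniq Px) map_inj_uniq ?(nperm_uniq Py) => [|u v /=]; last by lia.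
  rewrite andbT /=; apply/hasPn => w /mapP[u uy ->]; rewrite (mem_nperm _ Px).
  by move: uy; rewrite (mem_nperm _ Py); lia.
have Sz : size z = m + m by rewrite size_cat size_map Sx Sy.
exists (windows z); first exact: nperm_windows.
have : walk src dst (std (take m z)) (windows z) (std (drop (size z - m) z)).
  by apply: walk_windows; rewrite // Sz leq_addr.
rewrite Sz addnK /z take_size_cat // drop_size_cat //.
rewrite (std_nperm Px) std_mono ?(std_nperm Py) // => u v _ _ /=; lia.
Qed.

End OverlapGraph.

Lemma coversP w p : reflect
  (size w = size p /\ forall i j, i < size w -> j < size w ->
     nth 0 w i < nth 0 w j -> nth 0 p i < nth 0 p j)
  (covers w p).
Proof.
apply: (iffP andP) => [[/eqP Sw /forallP H]|[Sw H]]; split => //; first 1 last.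
- by apply/eqP.
- by apply/forallP => i; apply/forallP => j; apply/implyP; exact: H.
move=> i j Hi Hj; have /forallP/(_ (Ordinal Hj)) := H (Ordinal Hi).
exact/implyP.
Qed.

Lemma covers_dbl w p : covers (dbl w) p = covers w p.
Proof.
apply/coversP/coversP; rewrite size_map => -[Sw H]; split => // i j Hi Hj.
- by move=> lt_ij; apply: H; rewrite // !(nth_map 0) // ltn_pmul2l.
- by rewrite !(nth_map 0) // ltn_pmul2l //; exact: H.
Qed.

Lemma covers_std w p : uniq w -> is_nperm (size w) p -> covers w p = (p == std w).
Proof.
move=> Uw Pp; have Sp := size_nperm Pp.
apply/idP/eqP => [/coversP[_ H]|->]; last first.
  apply/coversP; split=> [|i j Hi Hj lt_ij]; first by rewrite size_map.
  by rewrite /std !(nth_map 0) //; apply: rank_lt; rewrite ?mem_nth.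
apply: (@eq_from_nth _ 0); rewrite ?size_map // Sp => i Hi.
rewrite /std (nth_map 0) // -(rank_nperm Pp (_ : nth 0 p i <= size w)); last first.
  by have := mem_nth 0 (_ : i < size p); rewrite (mem_nperm _ Pp) Sp => /(_ Hi) /andP[].
rewrite /rank (count_nth_iota 0 _ p) (count_nth_iota 0 _ w) Sp.
apply: eq_in_count => k; rewrite mem_iota add0n /= => Hk.
case: (ltngtP (nth 0 w k) (nth 0 w i)) => [lt_ki|lt_ik|eq_ki].
- by rewrite leq_eqVlt (H _ _ Hk Hi lt_ki) orbT.
- by apply/negbTE; rewrite -ltnNge; exact: H.
- have /eqP-> : k == i by rewrite -(nth_uniq 0 Hk Hi Uw) eq_ki.
  by rewrite !leqnn.
Qed.

Lemma covers_add_pair w w' p i0 j0 : size w' = size w -> i0 < size w -> j0 < size w ->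
  (forall i j, i < size w -> j < size w ->
     (nth 0 w' i < nth 0 w' j) = (nth 0 w i < nth 0 w j) || ((i == i0) && (j == j0))) ->
  covers w' p = covers w p && (nth 0 p i0 < nth 0 p j0).
Proof.
move=> Sw' Hi0 Hj0 lt_w'; apply/coversP/andP; rewrite Sw'.
- case=> Sw H; split; last by apply: H; rewrite // lt_w' // !eqxx orbT.
  by apply/coversP; split=> // i j Hi Hj lt_ij; apply: H; rewrite // lt_w' // lt_ij.
- case=> /coversP[Sw H] lt0; split=> // i j Hi Hj.
  by rewrite lt_w' // => /orP[/(H _ _ Hi Hj)|/andP[/eqP-> /eqP->]].
Qed.

Lemma covers_tie W x p : uniq W -> 0 < size W -> head 0 W = x ->
  x.-1 \notin W -> x.+1 \notin W -> 0 < x ->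
  uniq p -> size p = (size W).+1 ->
  covers (rcons W x) p = covers (rcons W x.+1) p || covers (rcons W x.-1) p.
Proof.
move=> UW + hW x1W x2W x_gt0 Up; move Wn : (size W) => n n_gt0 Sp.
have letter i : i < n ->
    [/\ (nth 0 W i == x) = (i == 0), nth 0 W i != x.-1 & nth 0 W i != x.+1].
  move=> Hi; rewrite -Wn in Hi n_gt0; rewrite -(nth_uniq 0 Hi n_gt0 UW) nth0 hW.
  by split => //; [apply: contraNneq x1W | apply: contraNneq x2W] => <-; exact: mem_nth.
have nthR z i : i < n.+1 -> nth 0 (rcons W z) i = if i < n then nth 0 W i else z.
  by rewrite nth_rcons Wn ltnS leq_eqVlt => /orP[/eqP->|->]; rewrite ?ltnn ?eqxx.
have Sx z : size (rcons W z) = n.+1 by rewrite size_rcons Wn.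
have lt_up i j : i < n.+1 -> j < n.+1 ->
    (nth 0 (rcons W x.+1) i < nth 0 (rcons W x.+1) j) =
    (nth 0 (rcons W x) i < nth 0 (rcons W x) j) || ((i == 0) && (j == n)).
  move=> Hi Hj; rewrite !nthR //.
  by case: (ltnP i n) => Hi'; case: (ltnP j n) => Hj';
    try have [? ? ?] := letter i Hi'; try have [? ? ?] := letter j Hj'; lia.
have lt_down i j : i < n.+1 -> j < n.+1 ->
    (nth 0 (rcons W x.-1) i < nth 0 (rcons W x.-1) j) =
    (nth 0 (rcons W x) i < nth 0 (rcons W x) j) || ((i == n) && (j == 0)).
  move=> Hi Hj; rewrite !nthR //.
  by case: (ltnP i n) => Hi'; case: (ltnP j n) => Hj';
    try have [? ? ?] := letter i Hi'; try have [? ? ?] := letter j Hj'; lia.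
rewrite (@covers_add_pair (rcons W x) (rcons W x.+1) p 0 n) ?Sx //.
rewrite (@covers_add_pair (rcons W x) (rcons W x.-1) p n 0) ?Sx //.
by rewrite -andb_orr -neq_ltn nth_uniq ?Sp // eq_sym -lt0n n_gt0 andbT.
Qed.

Lemma factor_rcons v x i n : i + n <= size v -> factor (rcons v x) i n = factor v i n.
Proof. by move=> le_v; rewrite /factor !take_drop -cats1 takel_cat // addnC. Qed.

Lemma factor_rcons_last v x t n : size v = t + n -> factor (rcons v x) t n.+1 = rcons (drop t v) x.
Proof.
move=> Sv; rewrite /factor drop_rcons ?Sv ?leq_addr // take_oversize //.
by rewrite size_rcons size_drop Sv addKn.
Qed.

Lemma factor_dbl u i n : factor (dbl u) i n = dbl (factor u i n).
Proof. by rewrite /factor /dbl map_take map_drop. Qed.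

Lemma window_uniq n u t : dist_incomp n.+1 u -> size u = t + n -> uniq (drop t u).
Proof.
move=> Du Su; apply/(uniqP 0) => a b; rewrite !inE /= size_drop Su addKn => lt_an lt_bn.
rewrite !nth_drop => E.
wlog le_ab : a b lt_an lt_bn E / a <= b.
  by move=> H; case: (leqP a b) => [|/ltnW] ?; [|symmetry]; apply: H.
apply/eqP; rewrite eqn_leq le_ab leqNgt /=; apply/negP => lt_ab.
have := Du (t + a) (t + b); rewrite !ltn_add2l lt_ab Su ltn_add2l lt_bn => /(_ isT E).
by rewrite subnDl subn1 /=; lia.
Qed.

Lemma dist_incomp_rcons_dbl n u t x : dist_incomp n.+1 u -> size u = t + n ->
  odd x || (x == 2 * nth 0 u t) -> dist_incomp n.+1 (rcons (dbl u) x).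
Proof.
move=> Du Su new_x i j /andP[lt_ij]; rewrite size_rcons size_map ltnS => le_ju.
have lt_iu : i < size u by lia.
rewrite !nth_rcons size_map lt_iu (nth_map 0) //.
have [lt_ju|ge_ju] := ltnP j (size u).
  by rewrite (nth_map 0) // => /eqP; rewrite eqn_pmul2l // => /eqP; apply: Du; rewrite lt_ij.
rewrite (_ : j == size u); last by lia.
move=> E; case/orP: new_x => [|/eqP x_t]; first by rewrite -E oddM.
move/eqP: E; rewrite x_t eqn_pmul2l // => /eqP E.
have [le_it|lt_ti] := leqP i t; first by lia.
by have := Du t i; rewrite lt_ti lt_iu -E => /(_ isT erefl); lia.
Qed.

(** * Merging edges *)

(* The two edges from a to rot 1 a that are covered by a single window whose last
   letter repeats its first one. *)
Definition kept (a : seq nat) := extend a (head 0 a).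
Definition partner (a : seq nat) := extend a (head 0 a).+1.

Lemma std_dbl_tie w : uniq w -> all (fun x => 0 < x) w -> 0 < size w ->
  std (rcons (dbl w) (2 * head 0 w).+1) = partner (std w) /\
  std (rcons (dbl w) (2 * head 0 w).-1) = kept (std w).
Proof.
case: w => // h w' Uw pos_w _; have h_gt0 : 0 < h := allP pos_w h (mem_head h w').
rewrite [head 0 _]/= !std_rcons ?std_dbl; try by apply/mapP => -[z _]; lia.
by rewrite count_dbl_lt_odd count_dbl_lt_pred // -rank_mem ?mem_head.
Qed.

Lemma covers_dbl_tie w p : uniq w -> all (fun x => 0 < x) w -> 0 < size w ->
  is_nperm (size w).+1 p ->
  covers (rcons (dbl w) (2 * head 0 w)) p = (p == partner (std w)) || (p == kept (std w)).
Proof.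
move=> Uw pos_w w_gt0 Pp; have [std_up std_down] := std_dbl_tie Uw pos_w w_gt0.
have Ud : uniq (dbl w) by rewrite dbl_uniq.
have h_gt0 : 0 < head 0 w by case: (w) w_gt0 pos_w => //= h w' _ /andP[].
have fresh_up : (2 * head 0 w).+1 \notin dbl w by apply/mapP => -[z _]; lia.
have fresh_down : (2 * head 0 w).-1 \notin dbl w by apply/mapP => -[z _]; lia.
have head_d : head 0 (dbl w) = 2 * head 0 w by case: (w).
have x_gt0 : 0 < 2 * head 0 w by rewrite muln_gt0.
rewrite (@covers_tie (dbl w) (2 * head 0 w)) ?size_map ?(nperm_uniq Pp) ?(size_nperm Pp) //.
by rewrite !covers_std ?rcons_uniq ?Ud ?fresh_up ?fresh_down ?size_rcons ?size_map ?std_up ?std_down.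
Qed.

Section MergedEdges.

Variables (m : nat) (S : seq (seq nat)).
Hypothesis m_gt0 : 0 < m.
Hypothesis S_uniq : uniq S.
Hypothesis S_nperm : {in S, forall a, is_nperm m a}.
Hypothesis S_rot : {in S, forall a, rot 1 a \in S}.

Definition edges := [seq p <- perms m.+1 | p \notin map partner S].

Definition repr (p : seq nat) := if p \in map partner S then kept (src m p) else p.

Definition covered (q : seq nat) :=
  if q \in map kept S then [:: q; partner (src m q)] else [:: q].

Lemma head_nperm a : is_nperm m a -> 0 < head 0 a <= m.
Proof.
case: a => [/size_nperm m0|x a Pa]; first by move: m_gt0; rewrite -m0.
by rewrite -(mem_nperm _ Pa) mem_head.
Qed.

Lemma nperm_kept a : is_nperm m a -> is_nperm m.+1 (kept a).
Proof. by move=> Pa; apply: nperm_extend => //; have := head_nperm Pa; lia. Qed.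

Lemma nperm_partner a : is_nperm m a -> is_nperm m.+1 (partner a).
Proof. by move=> Pa; apply: nperm_extend => //; have := head_nperm Pa; lia. Qed.

Lemma src_kept a : is_nperm m a -> src m (kept a) = a.
Proof. exact: src_extend. Qed.

Lemma src_partner a : is_nperm m a -> src m (partner a) = a.
Proof. exact: src_extend. Qed.

Lemma dst_kept a : is_nperm m a -> dst (kept a) = rot 1 a.
Proof. by move=> Pa; rewrite (dst_extend_head m_gt0 Pa) // leqnn leqnSn. Qed.

Lemma dst_partner a : is_nperm m a -> dst (partner a) = rot 1 a.
Proof. by move=> Pa; rewrite (dst_extend_head m_gt0 Pa) // leqnSn leqnn. Qed.

Lemma kept_neq_partner a b : is_nperm m a -> is_nperm m b -> kept a != partner b.
Proof.
move=> Pa Pb; apply/eqP => E; have Eab : a = b by rewrite -(src_kept Pa) E src_partner.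
by move: E; rewrite /kept /partner Eab => /extend_inj /n_Sn.
Qed.

Lemma partners_uniq : uniq (map partner S).
Proof.
rewrite map_inj_in_uniq // => a b aS bS.
by move/(congr1 (src m)); rewrite !src_partner ?S_nperm.
Qed.

Lemma edges_uniq : uniq edges.
Proof. exact/filter_uniq/perms_uniq. Qed.

Lemma perms_partners_edges : perm_eq (perms m.+1) (map partner S ++ edges).
Proof.
apply: uniq_perm; rewrite ?perms_uniq // ?cat_uniq ?partners_uniq ?edges_uniq ?andbT.
  by apply/hasPn => p; rewrite mem_filter => /andP[].
move=> p; rewrite mem_cat mem_filter orb_andr orbN /=; symmetry; apply/orb_idl.
by case/mapP=> a aS ->; rewrite mem_perms nperm_partner ?S_nperm.
Qed.

Lemma size_edges : size edges + size S = m.+1`!.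
Proof.
by rewrite -size_perms (perm_size perms_partners_edges) size_cat size_map addnC.
Qed.

Lemma perm_map_rot_S : perm_eq (map (rot 1) S) S.
Proof.
have Urot : uniq (map (rot 1) S) by rewrite map_inj_uniq //; exact: rot_inj.
have sub : {subset map (rot 1) S <= S} by move=> _ /mapP[a aS ->]; exact: S_rot.
apply: uniq_perm => //; have [|] := uniq_min_size Urot sub => //.
by rewrite size_map.
Qed.

Lemma edges_balanced v :
  count (fun e => src m e == v) edges = count (fun e => dst e == v) edges.
Proof.
(* Dropping partner a removes an edge out of a and an edge into rot 1 a. *)
have /permP count_perms := perms_partners_edges.
have src_P : count (fun e => src m e == v) (map partner S) = count (pred1 v) S.
  by rewrite count_map; apply: eq_in_count => a aS /=; rewrite src_partner ?S_nperm.
have dst_P : count (fun e => dst e == v) (map partner S) = count (pred1 v) S.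
  rewrite count_map -(permP perm_map_rot_S) count_map; apply: eq_in_count => a aS /=.
  by rewrite dst_partner ?S_nperm.
have := count_perms (fun e => src m e == v); rewrite count_src count_cat src_P.
have := count_perms (fun e => dst e == v); rewrite count_dst count_cat dst_P.
by move=> -> /addnI.
Qed.

Lemma repr_spec p : is_nperm m.+1 p ->
  [/\ repr p \in edges, src m (repr p) = src m p & dst (repr p) = dst p].
Proof.
rewrite /repr; case: ifPn => [/mapP[a aS ->] _|pP Pp]; last by rewrite mem_filter pP mem_perms.
have Pa := S_nperm aS.
rewrite src_partner // src_kept // dst_kept // dst_partner //; split => //.
rewrite mem_filter mem_perms nperm_kept // andbT; apply/mapP => -[b bS].
by apply/eqP; rewrite kept_neq_partner ?S_nperm.
Qed.

Lemma edges_connected x y : is_nperm m x -> is_nperm m y ->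
  exists2 c, all (mem edges) c & walk (src m) dst x c y.
Proof.
move=> Px Py; have [c Pc Wc] := perms_connected Px Py.
exists (map repr c).
  by rewrite all_map; apply/allP => p /(allP Pc) /repr_spec[].
by rewrite walk_map // => p /(allP Pc) /repr_spec[].
Qed.

Lemma mem_covered p q : is_nperm m.+1 p -> q \in edges ->
  (p \in covered q) = (repr p == q).
Proof.
have kept_inj : {in S &, injective kept}.
  by move=> a b aS bS /(congr1 (src m)); rewrite !src_kept ?S_nperm.
have partner_inj : {in S &, injective partner}.
  by move=> a b aS bS /(congr1 (src m)); rewrite !src_partner ?S_nperm.
move=> Pp; rewrite mem_filter => /andP[qP _]; rewrite /covered /repr.
case: ifPn => [/mapP[b bS ->]|qK]; case: ifPn => [/mapP[a aS ->]|pP].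
- rewrite src_kept ?src_partner ?S_nperm // !inE (inj_in_eq partner_inj) //.
  by rewrite (inj_in_eq kept_inj) // eq_sym (negbTE (kept_neq_partner _ _)) ?S_nperm.
- rewrite src_kept ?S_nperm // !inE orbC; case: eqP => // Ep.
  by move: pP; rewrite Ep map_f.
- rewrite src_partner ?S_nperm // inE; case: eqP => [Eq|_]; first by rewrite -Eq map_f in qP.
  by case: eqP => // Eq; rewrite -Eq map_f in qK.
- by rewrite inE.
Qed.

Lemma count_covered p : is_nperm m.+1 p -> count (fun q => p \in covered q) edges = 1.
Proof.
move=> Pp; have [repr_e _ _] := repr_spec Pp.
rewrite (eq_in_count (a2 := pred1 (repr p))) => [|q qe]; last by rewrite /= mem_covered // eq_sym.
by rewrite count_uniq_mem ?edges_uniq ?repr_e.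
Qed.

Lemma window_step w q : uniq w -> all (fun x => 0 < x) w -> std w = src m q -> q \in edges ->
  exists x, [/\ odd x || (x == 2 * head 0 w),
    forall p, is_nperm m.+1 p -> covers (rcons (dbl w) x) p = (p \in covered q)
  & std (behead (rcons (dbl w) x)) = dst q].
Proof.
move=> Uw pos_w std_w; rewrite mem_filter mem_perms => /andP[_ Pq].
have Sw : size w = m by rewrite -size_std std_w (size_nperm (nperm_src Pq)).
have Ud : uniq (dbl w) by rewrite dbl_uniq.
rewrite /covered; case: ifPn => [/mapP[a aS Eq]|qK].
  have Pa := S_nperm aS; have a_w : std w = a by rewrite std_w Eq src_kept.
  exists (2 * head 0 w); split; first by rewrite eqxx orbT.
    by move=> p Pp; rewrite covers_dbl_tie ?Sw // a_w Eq src_kept // !inE orbC.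
  have -> : behead (rcons (dbl w) (2 * head 0 w)) = rot 1 (dbl w).
    by case: (w) Sw => [|h w' _]; [move: m_gt0 => /[swap] <- | rewrite rot1_cons].
  by rewrite std_rot std_dbl a_w Eq dst_kept.
have [Eq Hj] := nperm_extendE Pq.
have [y ry] : exists y, rank w y = (last 0 q).-1 by apply: rank_surj; rewrite ?Sw; lia.
have fresh : (2 * y).+1 \notin dbl w by apply/mapP => -[z _]; lia.
have std_q : std (rcons (dbl w) (2 * y).+1) = q.
  by rewrite std_rcons // std_dbl count_dbl_lt_odd ry prednK ?std_w -?Eq //; case/andP: Hj.
exists (2 * y).+1; split; first by rewrite /= oddM.
  by move=> p Pp; rewrite covers_std ?rcons_uniq ?fresh ?size_rcons ?size_map ?Sw // std_q inE.
by rewrite -dst_std std_q.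
Qed.

Section Realization.

Variable s : seq (seq nat).
Hypothesis s_edges : perm_eq s edges.
Hypothesis s_trail : sorted (linked (src m) dst) s.

Definition realizes_prefix t u := [/\ size u = t + m, pos_word u, dist_incomp m.+1 u,
  forall i p, i < t -> is_nperm m.+1 p ->
    covers (factor u i m.+1) p = (p \in covered (nth [::] s i))
  & t < size s -> std (drop t u) = src m (nth [::] s t)].

Lemma nth_edge i : i < size s -> nth [::] s i \in edges.
Proof. by move=> lt_is; rewrite -(perm_mem s_edges) mem_nth. Qed.

Lemma realizes_prefix0 : 0 < size s -> exists u, realizes_prefix 0 u.
Proof.
move=> s_gt0; have := nth_edge s_gt0; rewrite mem_filter mem_perms => /andP[_].
move=> /nperm_src P0; exists (src m (nth [::] s 0)); split => //.
- by rewrite (size_nperm P0).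
- by apply/allP => z; rewrite (mem_nperm _ P0) => /andP[].
- move=> i j /andP[lt_ij lt_j] E; have := nth_uniq 0 (ltn_trans lt_ij lt_j) lt_j (nperm_uniq P0).
  by rewrite E eqxx ltn_eqF.
- by rewrite drop0 (std_nperm P0).
Qed.

Lemma realizes_prefixS t u : t < size s -> realizes_prefix t u ->
  exists u', realizes_prefix t.+1 u'.
Proof.
move=> lt_ts [Su pos_u Du cov_u std_u]; set w := drop t u.
have pos_w : all (fun x => 0 < x) w by apply/allP => z /mem_drop; apply/allP.
have Sw : size w = m by rewrite size_drop Su addKn.
have [x [new_x cov_x dst_x]] := window_step (window_uniq Du Su) pos_w (std_u lt_ts) (nth_edge lt_ts).
have head_w : head 0 w = nth 0 u t by rewrite -nth0 nth_drop addn0.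
exists (rcons (dbl u) x); split.
- by rewrite size_rcons size_map Su.
- rewrite /pos_word all_rcons all_map; apply/andP; split.
    case/orP: new_x => [/odd_gt0 //|/eqP->]; rewrite muln_gt0 /=.
    by apply: (allP pos_w); rewrite -nth0 mem_nth ?Sw.
  by apply: sub_all pos_u => z /=; rewrite muln_gt0.
- by apply: dist_incomp_rcons_dbl Du Su _; rewrite -head_w.
- move=> i p; rewrite ltnS leq_eqVlt => /orP[/eqP->|lt_it] Pp.
    by rewrite factor_rcons_last ?size_map ?Su // -map_drop cov_x.
  by rewrite factor_rcons ?factor_dbl ?covers_dbl ?cov_u ?size_map ?Su //; lia.
- move=> lt_t1s; rewrite -add1n -drop_drop drop_rcons ?size_map ?Su ?leq_addr //.
  rewrite -map_drop drop1 -/w dst_x; apply/eqP.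
  by have /sortedP := s_trail; apply.
Qed.

Lemma uword_of_trail : 0 < size s ->
  exists u, [/\ uword m.+1 u, dist_incomp m.+1 u & size u = size s + m].
Proof.
move=> s_gt0.
have [u [Su pos_u Du cov_u _]] : exists u, realizes_prefix (size s) u.
  suff grow t : t <= size s -> exists u, realizes_prefix t u by exact: grow.
  elim: t => [|t IH] le_ts; first exact: realizes_prefix0.
  by have [u /(realizes_prefixS le_ts)] := IH (ltnW le_ts).
exists u; split => //; split => //; split; first by rewrite Su; lia.
move=> p Pp; rewrite (_ : (size u - m.+1).+1 = size s); last by rewrite Su; lia.
rewrite (eq_in_count (a2 := fun i => p \in covered (nth [::] s i))); last first.
  by move=> i; rewrite mem_iota => /andP[_ lt_is]; apply: cov_u.
by rewrite -(count_nth_iota [::] (fun q => p \in covered q)) (permP s_edges) count_covered.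
Qed.

End Realization.

End MergedEdges.

Lemma rot1_rot_mem (T : eqType) (c : seq T) t : t < size c ->
  rot 1 (rot t c) \in [seq rot i c | i <- iota 0 (size c)].
Proof.
move=> lt_tc; apply/mapP; have [lt_t1c|le_ct1] := ltnP t.+1 (size c).
  by exists t.+1; [rewrite mem_iota add0n lt_t1c | rewrite -rotS].
exists 0; first by rewrite mem_iota; lia.
have Et : t.+1 = size c by lia.
by rewrite -rotS // Et rot_size rot0.
Qed.

Definition merge_set q k :=
  [seq rot t (rcons c q.+1) | c <- take k (perms q), t <- iota 0 q.+1].

Lemma nperm_rcons q c : is_nperm q c -> is_nperm q.+1 (rcons c q.+1).
Proof. by rewrite /is_nperm -cats1 -(addn1 q) iotaD add1n addn1 perm_cat2r. Qed.

Lemma index_rot_rcons q c t : is_nperm q c -> t <= q ->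
  index q.+1 (rot t (rcons c q.+1)) = q - t.
Proof.
move=> Pc le_tq; have Sc := size_nperm Pc.
have qc : q.+1 \notin c by rewrite (mem_nperm _ Pc) ltnn andbF.
rewrite /rot drop_rcons ?Sc // index_cat mem_rcons mem_head /= -cats1 index_cat.
by rewrite (negbTE (contra (@mem_drop _ _ _ _) qc)) /= eqxx size_drop Sc addn0.
Qed.

Lemma merge_set_props q k : k <= q`! ->
  [/\ uniq (merge_set q k), {in merge_set q k, forall a, is_nperm q.+1 a},
      {in merge_set q k, forall a, rot 1 a \in merge_set q k}
    & size (merge_set q k) = k * q.+1].
Proof.
move=> le_k; have Pc c : c \in take k (perms q) -> is_nperm q c by move/mem_take; rewrite mem_perms.
split.
- rewrite allpairs_uniq ?iota_uniq ?take_uniq ?perms_uniq //.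
  move=> [c1 t1] [c2 t2] /allpairsP[[c t] [cC tI [-> ->]]] /allpairsP[[c' t'] [cC' tI' [-> ->]]] /= E.
  move: tI tI'; rewrite !mem_iota /= !ltnS => le_tq le_t'q.
  have Et : t = t' by have := index_rot_rcons (Pc _ cC) le_tq; rewrite E index_rot_rcons ?Pc //; lia.
  by move: E; rewrite Et => /rot_inj /rcons_inj [->].
- move=> _ /allpairsP[[c t] [cC _ ->]] /=.
  by rewrite /is_nperm perm_rot; apply: nperm_rcons; apply: Pc.
- move=> _ /allpairsP[[c t] [cC tI ->]] /=.
  have Sc : size (rcons c q.+1) = q.+1 by rewrite size_rcons (size_nperm (Pc _ cC)).
  have := @rot1_rot_mem _ (rcons c q.+1) t; rewrite Sc => /(_ _)/mapP[|i iI ->].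
    by move: tI; rewrite mem_iota.
  by apply/allpairsP; exists (c, i).
- by rewrite size_allpairs size_takel ?size_perms // size_iota.
Qed.

Lemma uword_of_merge_set q k : k <= q`! ->
  exists u, [/\ uword q.+2 u, dist_incomp q.+2 u & size u + k * q.+1 = q.+2`! + q.+1].
Proof.
move=> le_k; have [US PS RS SS] := merge_set_props le_k.
set S := merge_set q k in US PS RS SS; have m_gt0 : 0 < q.+1 by [].
have connected e f : e \in edges q.+1 S -> f \in edges q.+1 S ->
    exists2 c, all (mem (edges q.+1 S)) c & walk (src q.+1) dst (dst e) c (src q.+1 f).
  rewrite !mem_filter !mem_perms => /andP[_ Pe] /andP[_ Pf].
  exact: edges_connected (nperm_dst Pe) (nperm_src Pf).
have [s s_edges s_trail] :=
  eulerian_trail (edges_uniq q.+1 S) (edges_balanced m_gt0 US PS RS) connected.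
have Ss : size s + k * q.+1 = q.+2`! by rewrite (perm_size s_edges) -SS size_edges.
have s_gt0 : 0 < size s.
  have : k * q.+1 <= q`! * q.+1 by rewrite leq_mul2r le_k orbT.
  have := fact_gt0 q; rewrite !factS in Ss *; nia.
have [u [Uu Du Su]] := uword_of_trail m_gt0 US PS s_edges s_trail s_gt0.
by exists u; split => //; rewrite Su -Ss addnAC.
Qed.

Local Open Scope ring_scope.

Theorem theorem1 (n k : nat) :
  (2 <= n)%N -> (k <= (n - 2)`!)%N ->
  exists u : seq nat,
    uword n u /\ dist_incomp n u /\
    (size u)%:Z = (n`!)%:Z + (1 - k%:Z) * (n - 1)%:Z.
Proof.
move=> le2n; have [q ->] : exists q, n = q.+2 by exists (n - 2)%N; lia.
rewrite !subSS !subn0 => /uword_of_merge_set[u [Uu Du Su]].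
exists u; split => //; split => //.
have : (size u)%:Z + (k * q.+1)%N%:Z = (q.+2`!)%:Z + (q.+1)%:Z by rewrite -!PoszD Su.
by rewrite PoszM; lia.
Qed.
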